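(* The augmentation homomorphism $\varepsilon_1:\Lambda(\mathbb{Q}\mathrm{Tree})\to L_0$ has no splitting preserving the units; that is, there is no Lie algebra homomorphism $s:L_0\to\Lambda(\mathbb{Q}\mathrm{Tree})$ with $\varepsilon_1\circ s=\mathrm{id}_{L_0}$ and $s\left(x\frac{d}{dx}\right)=1\in\mathrm{Tree}((1))$.
   Context: $\mathrm{Tree}((m))$, $m\ge1$, is the set of planar rooted trees with one root at the bottom and $m$ leaves at the top labeled $1,\dots,m$ from left to right, every internal vertex having at least two inputs; equivalently, meaningful ways of inserting parentheses into the word $12\cdots m$ (e.g. $\mathrm{Tree}((3))=\{((12)3),(1(23)),(123)\}$). Composition $S\circ_iT$ grafts the root of $T$ to the $i$-th leaf of $S$, making $\mathrm{Tree}$ a nonsymmetric operad of sets with unit the trivial tree $1\in\mathrm{Tree}((1))$. $\Lambda(\mathbb{Q}\mathrm{Tree})=\bigoplus_{m\ge1}\mathbb{Q}\mathrm{Tree}((m))$ with Lie bracket $[c,d]=\sum_{t=1}^{j}d\circ_tc-\sum_{s=1}^{k}c\circ_sd$ for $c\in\mathrm{Tree}((k))$, $d\in\mathrm{Tree}((j))$, extended bilinearly. $L_0=x\mathbb{Q}[x]\frac{d}{dx}$ is the Lie algebra of polynomial vector fields on the line vanishing at $0$. The augmentation $\varepsilon_1$ is the (surjective) Lie algebra homomorphism sending every tree in $\mathrm{Tree}((m))$ to $x^m\frac{d}{dx}$. *)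

From HB Require Import structures.
From mathcomp Require Import all_boot all_order all_algebra.
From mathcomp Require Import finmap.
From mathcomp.multinomials Require Import monalg.

Set Implicit Arguments.
Unset Strict Implicit.
Unset Printing Implicit Defensive.

Import GRing.Theory.
Local Open Scope ring_scope.

(* Planar rooted trees.  [Leaf] is a leaf (input); [Node ts] is an     *)
(* internal vertex whose inputs are the subtrees [ts], listed from     *)
(* left to right.  The root is at the bottom.                          *)
Inductive ptree : Type := Leaf | Node of seq ptree.

Fixpoint ptree_enc (t : ptree) : GenTree.tree unit :=
  match t with
  | Leaf => GenTree.Node 0 [::]
  | Node ts => GenTree.Node 1 (map ptree_enc ts)
  end.

Fixpoint ptree_dec (g : GenTree.tree unit) : ptree :=
  match g with
  | GenTree.Leaf _ => Leaf
  | GenTree.Node 0 _ => Leaf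
  | GenTree.Node _ gs => Node (map ptree_dec gs)
  end.

Lemma ptree_encK : cancel ptree_enc ptree_dec.
Proof.
rewrite /cancel; fix IH 1; case=> [|ts] //=; congr Node.
elim: ts => [|t ts IHts] //=; by rewrite IH IHts.
Qed.

HB.instance Definition _ := Countable.copy ptree (can_type ptree_encK).

Fixpoint leaves (t : ptree) : nat :=
  match t with
  | Leaf => 1
  | Node ts => sumn (map leaves ts)
  end.

Fixpoint valid_tree (t : ptree) : bool :=
  match t with
  | Leaf => true
  | Node ts => (2 <= size ts)%N && all valid_tree ts
  end.

Definition Tree (m : nat) : pred ptree := fun t => valid_tree t && (leaves t == m).

(* [graft0 S i T] grafts the root of T onto the leaf of S with
   0-based index i (leaves numbered from left to right). *)
Fixpoint graft0 (S : ptree) (i : nat) (T : ptree) : ptree :=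
  match S with
  | Leaf => if i == 0%N then T else Leaf
  | Node ss =>
      Node ((fix gl (ss : seq ptree) (i : nat) : seq ptree :=
               match ss with
               | [::] => [::]
               | u :: us => if (i < leaves u)%N then graft0 u i T :: us
                            else u :: gl us (i - leaves u)%N
               end) ss i)
  end.

(* Operadic composition S o_i T, with 1-based leaf index i (1 <= i <= leaves S). *)
Definition ocomp (S : ptree) (i : nat) (T : ptree) : ptree := graft0 S i.-1 T.

Definition unit_tree : ptree := Leaf.

Definition Lam := {malg rat[ptree]}.

Definition in_Lam (a : Lam) : Prop := forall t, t \in msupp a -> valid_tree t.

Definition tree_bracket (c d : ptree) : Lam :=
  \sum_(1 <= t < (leaves d).+1) << ocomp d t c >>
  - \sum_(1 <= s < (leaves c).+1) << ocomp c s d >>.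

Definition lam_bracket (a b : Lam) : Lam :=
  \sum_(c <- msupp a) \sum_(d <- msupp b) (a@_c * b@_d) *: tree_bracket c d.

(* L_0 = x Q[x] d/dx: the vector field f(x) d/dx is represented by the
   polynomial f, with f(0) = 0. *)
Definition in_L0 (f : {poly rat}) : Prop := f`_0 = 0.

Definition vf_bracket (f g : {poly rat}) : {poly rat} := f * g^`() - g * f^`().

Definition eps1 (a : Lam) : {poly rat} :=
  \sum_(t <- msupp a) a@_t *: 'X^(leaves t).

(* Bracketing with the unit tree multiplies a tree with m leaves by m - 1, just as
   [x d/dx, -] multiplies x^m d/dx by m - 1.  Hence a unital splitting s sends x^m d/dx
   to a combination of trees with m leaves whose coefficients sum to 1: s(x^2 d/dx) is
   the tree (12), and s(x^3 d/dx) = α ((12)3) + β (1(23)) + γ (123) with α + β + γ = 1.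
   In L_0 the fields e_n = x^(n+1) d/dx satisfy [e_1,[e_1,[e_1,e_2]]] = 6 e_5
   = 6 [e_2,[e_1,e_2]], so the images of e_1 and e_2 must satisfy the same relation;
   comparing coefficients of three trees with six leaves then forces α = β = γ = 0. *)

From mathcomp Require Import all_boot all_algebra.
From mathcomp Require Import finmap.
From mathcomp.multinomials Require Import monalg.
From mathcomp Require Import zify ring lra.
From Stdlib Require List.

Import GRing.Theory Num.Theory.
Local Open Scope ring_scope.

Section MalgSums.
Context {K : choiceType} {G : zmodType}.

Lemma big_msupp_sub (V : nmodType) (g : {malg G[K]}) (S : seq K) (F : K -> G -> V) :
  uniq S -> {subset msupp g <= S} -> (forall k, F k 0 = 0) ->
  \sum_(k <- msupp g) F k g@_k = \sum_(k <- S) F k g@_k.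
Proof.
move=> uniqS gS F0; rewrite [RHS](bigID (mem (msupp g))) /=.
rewrite [X in _ + X]big1 ?addr0; last by move=> k /mcoeff_outdom ->.
rewrite -[RHS]big_filter; apply: perm_big; apply: uniq_perm; rewrite ?fset_uniq ?filter_uniq //.
by move=> k; rewrite mem_filter; case: (boolP (k \in msupp g)) => // /gS ->.
Qed.

Lemma monalgEw_seq (g : {malg G[K]}) (S : seq K) : uniq S -> {subset msupp g <= S} ->
  g = \sum_(k <- S) << g@_k *g k >>.
Proof.
move=> uniqS gS; rewrite {1}[g]monalgE.
by rewrite (@big_msupp_sub _ g S (fun k x => << x *g k >>)) // => k; rewrite monalgU0.
Qed.

End MalgSums.

Lemma monalgU_scale (K : choiceType) (R : ringType) (x : R) (k : K) :
  << x *g k >> = x *: << k >>.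
Proof. by apply/malgP => k'; rewrite mcoeffZ !mcoeffU mulr_natr. Qed.

Lemma msuppU_sub {K : choiceType} {R : ringType} (k : K) :
  {subset msupp (<< k >> : {malg R[K]}) <= [:: k]}.
Proof. by move=> u /(fsubsetP msuppU_le); rewrite in_fset1 inE. Qed.

Lemma lam_expand {a : Lam} {S : seq ptree} : uniq S -> {subset msupp a <= S} ->
  a = \sum_(t <- S) a@_t *: << t >>.
Proof.
move=> uniqS aS; rewrite {1}(@monalgEw_seq _ _ a S uniqS aS).
by apply: eq_bigr => t _; rewrite monalgU_scale.
Qed.

Lemma eps1_homogeneous {a : Lam} {m : nat} :
  {in msupp a, forall t, leaves t = m} -> eps1 a = (\sum_(t <- msupp a) a@_t) *: 'X^m.
Proof.
move=> homog; rewrite /eps1 scaler_suml big_seq [RHS]big_seq.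
by apply: eq_bigr => t /homog ->.
Qed.

Lemma lam_bracketEw {S T : seq ptree} {a b : Lam} : uniq S -> uniq T ->
  {subset msupp a <= S} -> {subset msupp b <= T} ->
  lam_bracket a b = \sum_(c <- S) \sum_(d <- T) (a@_c * b@_d) *: tree_bracket c d.
Proof.
move=> uniqS uniqT aS bT; rewrite /lam_bracket.
rewrite (@big_msupp_sub _ _ _ a S (fun c x => \sum_(d <- msupp b) (x * b@_d) *: tree_bracket c d))
  //; last by move=> c; apply: big1 => d _; rewrite mul0r scale0r.
apply: eq_bigr => c _.
by rewrite (@big_msupp_sub _ _ _ b T (fun d y => (a@_c * y) *: tree_bracket c d)) // => d;
  rewrite mulr0 scale0r.
Qed.

Lemma msupp_scaleD_sub (r : rat) (a a' : Lam) :
  {subset msupp (r *: a + a') <= (msupp a `|` msupp a')%fset}.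
Proof.
apply/fsubsetP; apply: fsubset_trans (msuppD_le _ _) _.
exact/fsetSU/msuppZ_le.
Qed.

Lemma lam_bracket_linearl (r : rat) (a a' b : Lam) :
  lam_bracket (r *: a + a') b = r *: lam_bracket a b + lam_bracket a' b.
Proof.
pose S := (msupp a `|` msupp a')%fset.
have [aS a'S] : {subset msupp a <= S} /\ {subset msupp a' <= S}.
  by split; apply/fsubsetP; [exact: fsubsetUl | exact: fsubsetUr].
have bE := @lam_bracketEw S (msupp b) _ b (fset_uniq _) (fset_uniq _) _ (fun _ => id).
rewrite !bE //; last exact: msupp_scaleD_sub.
rewrite scaler_sumr -big_split; apply: eq_bigr => c _.
rewrite scaler_sumr -big_split; apply: eq_bigr => d _.
by rewrite mcoeffD mcoeffZ scalerA mulrDl scalerDl mulrA.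
Qed.

Lemma lam_bracket_linearr (r : rat) (a b b' : Lam) :
  lam_bracket a (r *: b + b') = r *: lam_bracket a b + lam_bracket a b'.
Proof.
pose T := (msupp b `|` msupp b')%fset.
have [bT b'T] : {subset msupp b <= T} /\ {subset msupp b' <= T}.
  by split; apply/fsubsetP; [exact: fsubsetUl | exact: fsubsetUr].
have aE := @lam_bracketEw (msupp a) T a _ (fset_uniq _) (fset_uniq _) (fun _ => id).
rewrite !aE //; last exact: msupp_scaleD_sub.
rewrite scaler_sumr -big_split; apply: eq_bigr => c _.
rewrite scaler_sumr -big_split; apply: eq_bigr => d _.
by rewrite mcoeffD mcoeffZ scalerA mulrDr scalerDl mulrCA.
Qed.

Lemma lam_bracket0l (b : Lam) : lam_bracket 0 b = 0.
Proof.
by rewrite (@lam_bracketEw [::] (msupp b)) ?fset_uniq ?big_nil // msupp0.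
Qed.

Lemma lam_bracket0r (a : Lam) : lam_bracket a 0 = 0.
Proof.
rewrite (@lam_bracketEw (msupp a) [::]) ?fset_uniq ?msupp0 //.
by rewrite big1 // => c _; rewrite big_nil.
Qed.

Lemma lam_bracketDl (a a' b : Lam) :
  lam_bracket (a + a') b = lam_bracket a b + lam_bracket a' b.
Proof. by rewrite -[a in LHS]scale1r lam_bracket_linearl scale1r. Qed.

Lemma lam_bracketDr (a b b' : Lam) :
  lam_bracket a (b + b') = lam_bracket a b + lam_bracket a b'.
Proof. by rewrite -[b in LHS]scale1r lam_bracket_linearr scale1r. Qed.

Lemma lam_bracketZl (r : rat) (a b : Lam) : lam_bracket (r *: a) b = r *: lam_bracket a b.
Proof. by rewrite -[r *: a]addr0 lam_bracket_linearl lam_bracket0l addr0. Qed.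

Lemma lam_bracketZr (r : rat) (a b : Lam) : lam_bracket a (r *: b) = r *: lam_bracket a b.
Proof. by rewrite -[r *: b]addr0 lam_bracket_linearr lam_bracket0r addr0. Qed.

Lemma lam_bracketUU (c d : ptree) : lam_bracket << c >> << d >> = tree_bracket c d.
Proof.
rewrite (lam_bracketEw (S := [:: c]) (T := [:: d]) isT isT (msuppU_sub c) (msuppU_sub d)).
by rewrite !big_seq1 !mcoeffUU mulr1 scale1r.
Qed.

Lemma lam_bracket_suml (I : Type) (r : seq I) (F : I -> Lam) (b : Lam) :
  lam_bracket (\sum_(i <- r) F i) b = \sum_(i <- r) lam_bracket (F i) b.
Proof.
elim: r => [|i r IH]; first by rewrite !big_nil lam_bracket0l.
by rewrite !big_cons lam_bracketDl IH.
Qed.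

Lemma lam_bracket_sumr (I : Type) (r : seq I) (a : Lam) (F : I -> Lam) :
  lam_bracket a (\sum_(i <- r) F i) = \sum_(i <- r) lam_bracket a (F i).
Proof.
elim: r => [|i r IH]; first by rewrite !big_nil lam_bracket0r.
by rewrite !big_cons lam_bracketDr IH.
Qed.

Definition ptree_ind_in (P : ptree -> Prop) (P_Leaf : P Leaf)
    (P_Node : forall ts, (forall t, List.In t ts -> P t) -> P (Node ts)) :
  forall t, P t :=
  fix F t := match t with
  | Leaf => P_Leaf
  | Node ts => P_Node ts ((fix G ts : forall t, List.In t ts -> P t :=
       match ts with
       | [::] => fun t (h : List.In t [::]) => match h with end
       | u :: us => fun t h => match h with
                              | or_introl e => eq_ind u P (F u) t e
                              | or_intror h' => G us t h'
                              end
       end) ts)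
  end.

Lemma graft0_Leaf (t : ptree) (i : nat) : graft0 t i Leaf = t.
Proof.
elim/ptree_ind_in: t i => [|ts IH] i /=; first by case: (i == 0%N).
congr Node; elim: ts i IH => [|u us IHus] i IH //=.
case: ifP => _; first by rewrite IH //; left.
by rewrite IHus // => t ht; apply: IH; right.
Qed.

Lemma tree_bracket_Leafl (d : ptree) :
  tree_bracket Leaf d = ((leaves d)%:R - 1) *: << d >>.
Proof.
rewrite /tree_bracket /ocomp /=.
under eq_bigr => i _ do rewrite graft0_Leaf.
by rewrite !sumr_const_nat subn1 big_nat1 scalerBl scaler_nat scale1r.
Qed.

Lemma mcoeff_bracket_Leafl (a : Lam) (u : ptree) :
  (lam_bracket << Leaf >> a)@_u = ((leaves u)%:R - 1) * a@_u.
Proof.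
rewrite (lam_bracketEw (S := [:: Leaf]) isT (fset_uniq _) (msuppU_sub Leaf) (fun _ => id))
  big_seq1 mcoeffUU raddf_sum /=.
under eq_bigr => d _ do
  rewrite mul1r tree_bracket_Leafl scalerA mcoeffZ mcoeffU mulr_natr.
have [u_a | u_na] := boolP (u \in msupp a); last first.
  rewrite (mcoeff_outdom u_na) mulr0 big1_seq // => d /andP [_ d_a].
  by case: eqP d_a u_na => // -> ->.
rewrite (bigD1_seq u) ?fset_uniq //= eqxx mulrC big1 ?addr0 // => d /negbTE ->.
by rewrite mulr0n.
Qed.

Lemma msupp_bracket_Leaf_eigen (a : Lam) (n : nat) :
  lam_bracket << Leaf >> a = n%:R *: a -> {in msupp a, forall t, leaves t = n.+1}.
Proof.
move=> eigen t t_a; move/(congr1 (mcoeff t)): eigen.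
rewrite mcoeff_bracket_Leafl mcoeffZ => /eqP.
rewrite -subr_eq0 -mulrBl mulf_eq0 mcoeff_eq0 t_a orbF subr_eq0 subr_eq natr1 eqr_nat.
by move/eqP.
Qed.

Lemma leaves_gt0 {t : ptree} : valid_tree t -> (0 < leaves t)%N.
Proof.
elim/ptree_ind_in: t => [|[|u us] IH] //= /andP [_ /andP [valid_u _]].
by have := IH u (or_introl erefl) valid_u; lia.
Qed.

Lemma size_le_leaves {ts : seq ptree} :
  all valid_tree ts -> (size ts <= sumn (map leaves ts))%N.
Proof.
elim: ts => [|t ts IH] //= /andP [valid_t valid_ts].
by have := leaves_gt0 valid_t; have := IH valid_ts; lia.
Qed.

Definition tree2 := Node [:: Leaf; Leaf].
Definition tree3l := Node [:: tree2; Leaf].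
Definition tree3r := Node [:: Leaf; tree2].
Definition tree3 := Node [:: Leaf; Leaf; Leaf].
Definition trees3 := [:: tree3l; tree3r; tree3].

Lemma leaves_eq1 {t : ptree} : valid_tree t -> leaves t = 1%N -> t = Leaf.
Proof.
case: t => [|ts] //= /andP [size_ts valid_ts].
by have := size_le_leaves valid_ts; lia.
Qed.

Lemma leaves_eq2 {t : ptree} : valid_tree t -> leaves t = 2%N -> t = tree2.
Proof.
case: t => [|[|u [|v ts]]] //= /and3P [valid_u valid_v valid_ts] leaves_t.
have := size_le_leaves valid_ts; have := leaves_gt0 valid_u; have := leaves_gt0 valid_v.
move=> v_gt0 u_gt0 size_ts.
have leaves_u : leaves u = 1%N by lia.
have leaves_v : leaves v = 1%N by lia.
have -> : ts = [::] by case: ts size_ts leaves_t {valid_ts} => //= w ts; lia.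
by rewrite (leaves_eq1 valid_u leaves_u) (leaves_eq1 valid_v leaves_v).
Qed.

Lemma leaves_eq3 {t : ptree} : valid_tree t -> leaves t = 3%N -> t \in trees3.
Proof.
case: t => [|[|u [|v ts]]] //= /and3P [valid_u valid_v valid_ts] leaves_t.
have := size_le_leaves valid_ts; have := leaves_gt0 valid_u; have := leaves_gt0 valid_v.
move=> v_gt0 u_gt0 size_ts.
case: ts leaves_t valid_ts size_ts => [|w ts] /= leaves_t valid_ts size_ts.
  have [[leaves_u leaves_v] | [leaves_u leaves_v]] :
      (leaves u = 1 /\ leaves v = 2 \/ leaves u = 2 /\ leaves v = 1)%N by lia.
    by rewrite (leaves_eq1 valid_u leaves_u) (leaves_eq2 valid_v leaves_v) !inE eqxx orbT.
  by rewrite (leaves_eq2 valid_u leaves_u) (leaves_eq1 valid_v leaves_v) !inE eqxx.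
case/andP: valid_ts => valid_w valid_ts; have w_gt0 := leaves_gt0 valid_w.
have leaves_u : leaves u = 1%N by lia.
have leaves_v : leaves v = 1%N by lia.
have leaves_w : leaves w = 1%N by lia.
have -> : ts = [::] by case: ts size_ts leaves_t {valid_ts} => //= x ts; lia.
rewrite (leaves_eq1 valid_u leaves_u) (leaves_eq1 valid_v leaves_v).
by rewrite (leaves_eq1 valid_w leaves_w) !inE eqxx !orbT.
Qed.

(* Integer combinations of trees: a computable mirror of [Lam], on which [vm_compute]
   evaluates the coefficients of iterated brackets of trees. *)
Definition zcomb := seq (int * ptree).

Definition lam_of (A : zcomb) : Lam := \sum_(p <- A) p.1%:~R *: << p.2 >>.

Definition zU (t : ptree) : zcomb := [:: (1%Z, t)].

Definition zscale (k : int) (A : zcomb) : zcomb := [seq (k * p.1, p.2) | p <- A].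

Definition ztree_bracket (c d : ptree) : zcomb :=
  [seq (1%Z, ocomp d i c) | i <- iota 1 (leaves d)] ++
  [seq ((-1)%Z, ocomp c i d) | i <- iota 1 (leaves c)].

Definition zbracket (A B : zcomb) : zcomb :=
  flatten [seq flatten [seq zscale (p.1 * q.1) (ztree_bracket p.2 q.2) | q <- B] | p <- A].

Fixpoint zcoef (u : ptree) (A : zcomb) : int :=
  if A is p :: A' then (if p.2 == u then p.1 else 0) + zcoef u A' else 0.

Lemma lam_of_cat (A B : zcomb) : lam_of (A ++ B) = lam_of A + lam_of B.
Proof. by rewrite /lam_of big_cat. Qed.

Lemma lam_of_flatten (As : seq zcomb) : lam_of (flatten As) = \sum_(A <- As) lam_of A.
Proof.
elim: As => [|A As IH]; first by rewrite /lam_of !big_nil.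
by rewrite /= lam_of_cat IH big_cons.
Qed.

Lemma lam_of_zscale (k : int) (A : zcomb) : lam_of (zscale k A) = k%:~R *: lam_of A.
Proof.
rewrite /lam_of big_map scaler_sumr; apply: eq_bigr => p _.
by rewrite scalerA intrM.
Qed.

Lemma lam_of_ztree_bracket (c d : ptree) : lam_of (ztree_bracket c d) = tree_bracket c d.
Proof.
rewrite lam_of_cat /lam_of !big_map /tree_bracket /index_iota !subSS !subn0 -sumrN.
by congr (_ + _); apply: eq_bigr => i _; rewrite ?scale1r ?scaleN1r.
Qed.

Lemma lam_of_zU (t : ptree) : lam_of (zU t) = << t >>.
Proof. by rewrite /lam_of big_seq1 scale1r. Qed.

Lemma lam_of_zbracket (A B : zcomb) :
  lam_of (zbracket A B) = lam_bracket (lam_of A) (lam_of B).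
Proof.
rewrite lam_of_flatten big_map [lam_of A]/lam_of lam_bracket_suml; apply: eq_bigr => p _.
rewrite lam_of_flatten big_map lam_bracketZl [lam_of B]/lam_of lam_bracket_sumr scaler_sumr.
apply: eq_bigr => q _.
by rewrite lam_of_zscale lam_bracketZr lam_bracketUU lam_of_ztree_bracket !scalerA intrM mulrC.
Qed.

Lemma mcoeff_lam_of (A : zcomb) (u : ptree) : (lam_of A)@_u = (zcoef u A)%:~R.
Proof.
elim: A => [|p A IH]; first by rewrite /lam_of big_nil mcoeff0.
rewrite /lam_of big_cons mcoeffD mcoeffZ mcoeffU -/(lam_of A) IH /= intrD.
by case: eqP => _; rewrite ?mulr1 ?mulr0.
Qed.

Lemma mcoeff_bracket3_sum (d : ptree) (S : seq ptree) (w : ptree -> rat) (u : ptree) :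
  (lam_bracket << d >> (lam_bracket << d >> (lam_bracket << d >>
     (\sum_(t <- S) w t *: << t >>))))@_u =
  \sum_(t <- S) w t * (zcoef u (zbracket (zU d) (zbracket (zU d) (zbracket (zU d) (zU t)))))%:~R.
Proof.
(* The patterns are needed: [lam_bracket] unfolds to a sum, so an unrestricted
   [lam_bracket_sumr] also matches the outer brackets. *)
rewrite ![lam_bracket _ (\sum_(t <- S) _)]lam_bracket_sumr raddf_sum /=.
apply: eq_bigr => t _; rewrite ![lam_bracket _ (w t *: _)]lam_bracketZr mcoeffZ.
by rewrite -!lam_of_zU -!lam_of_zbracket mcoeff_lam_of.
Qed.

Lemma mcoeff_bracket_sum_bracket (d : ptree) (S : seq ptree) (w : ptree -> rat) (u : ptree) :
  (lam_bracket (\sum_(t <- S) w t *: << t >>)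
     (lam_bracket << d >> (\sum_(t <- S) w t *: << t >>)))@_u =
  \sum_(t <- S) \sum_(t' <- S)
    w t * w t' * (zcoef u (zbracket (zU t) (zbracket (zU d) (zU t'))))%:~R.
Proof.
rewrite [lam_bracket << d >> _]lam_bracket_sumr lam_bracket_suml raddf_sum /=.
apply: eq_bigr => t _; rewrite lam_bracketZl mcoeffZ lam_bracket_sumr raddf_sum /= mulr_sumr.
apply: eq_bigr => t' _; rewrite lam_bracketZr [lam_bracket << t >> _]lam_bracketZr mcoeffZ.
by rewrite -!lam_of_zU -!lam_of_zbracket mcoeff_lam_of mulrA.
Qed.

(* ((12)(3(45)))6, 1(((23)4)(56)) and (12)(34)(56): for c = (12) and T as above, their
   coefficients in [c,[c,[c,T]]] are -4β, -4α and 6γ, and none of them occurs in [T,[c,T]]. *)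
Definition tree6a := Node [:: Node [:: tree2; Node [:: Leaf; tree2]]; Leaf].
Definition tree6b := Node [:: Leaf; Node [:: Node [:: tree2; Leaf]; tree2]].
Definition tree6c := Node [:: tree2; tree2; tree2].

Ltac eval_zcoef :=
  repeat match goal with |- context [zcoef ?u ?A] =>
    let v := eval vm_compute in (zcoef u A) in
    rewrite (_ : zcoef u A = v); last by vm_compute
  end.

Lemma degree5_obstruction (c T : Lam) (w : ptree -> rat) :
  c = << tree2 >> -> T = \sum_(t <- trees3) w t *: << t >> -> \sum_(t <- trees3) w t = 1 ->
  lam_bracket c (lam_bracket c (lam_bracket c T)) <> 6 *: lam_bracket T (lam_bracket c T).
Proof.
move=> -> -> sum_w relation; have coef u := congr1 (mcoeff u) relation.
move: sum_w (coef tree6a) (coef tree6b) (coef tree6c).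
rewrite !mcoeffZ !mcoeff_bracket3_sum !mcoeff_bracket_sum_bracket /trees3 !big_cons !big_nil.
by eval_zcoef; lra.
Qed.

Lemma in_L0Xn (n : nat) : in_L0 ('X^(n.+1) : {poly rat}).
Proof. by rewrite /in_L0 coefXn. Qed.

Lemma vf_bracketXn (m n : nat) :
  vf_bracket 'X^(m.+1) 'X^(n.+1) = (n%:R - m%:R) *: ('X^((m + n).+1) : {poly rat}).
Proof.
rewrite /vf_bracket !derivXn /= !mulrnAr -!exprD !addSn [(n + m)%N]addnC.
by rewrite -!scaler_nat -scalerBl; congr (_ *: _); rewrite !mulrS; ring.
Qed.

Definition unital_splitting (s : {poly rat} -> Lam) : Prop :=
  [/\ forall f, in_L0 f -> in_Lam (s f),
      forall (r : rat) f g, in_L0 f -> in_L0 g -> s (r *: f + g) = r *: s f + s g,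
      forall f g, in_L0 f -> in_L0 g -> s (vf_bracket f g) = lam_bracket (s f) (s g),
      forall f, in_L0 f -> eps1 (s f) = f
    & s 'X = << unit_tree >>].

Section UnitalSplitting.

Context {s : {poly rat} -> Lam}.
Hypothesis s_splitting : unital_splitting s.

Lemma splitting_bracketXn (m n : nat) :
  lam_bracket (s 'X^(m.+1)) (s 'X^(n.+1)) = (n%:R - m%:R) *: s 'X^((m + n).+1).
Proof.
have [_ s_lin s_bracket _ _] := s_splitting.
have L0_0 : in_L0 0 by rewrite /in_L0 coef0.
have s0 : s 0 = 0.
  by have := s_lin (-1) 0 0 L0_0 L0_0; rewrite scaler0 addr0 scaleN1r addNr.
have sZ r f : in_L0 f -> s (r *: f) = r *: s f.
  by move=> L0_f; have := s_lin r f 0 L0_f L0_0; rewrite !addr0 s0 addr0.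
by rewrite -s_bracket ?vf_bracketXn ?sZ //; exact: in_L0Xn.
Qed.

Lemma splitting_leaves {n : nat} :
  {in msupp (s 'X^(n.+1)), forall t, valid_tree t /\ leaves t = n.+1}.
Proof.
have [s_Lam _ _ _ s_X] := s_splitting.
have eigen : lam_bracket << Leaf >> (s 'X^(n.+1)) = n%:R *: s 'X^(n.+1).
  by have := splitting_bracketXn 0 n; rewrite expr1 s_X subr0.
move=> t t_s; split; first exact: s_Lam (in_L0Xn n) t t_s.
exact: msupp_bracket_Leaf_eigen eigen t t_s.
Qed.

Lemma splitting_coef_sum {n : nat} {S : seq ptree} :
  uniq S -> {subset msupp (s 'X^(n.+1)) <= S} -> \sum_(t <- S) (s 'X^(n.+1))@_t = 1.
Proof.
move=> uniqS s_S; have [_ _ _ s_eps _] := s_splitting.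
have := s_eps _ (in_L0Xn n).
rewrite (eps1_homogeneous (fun t t_s => (splitting_leaves t t_s).2)).
rewrite (@big_msupp_sub _ _ _ _ S (fun _ x => x)) // => /(congr1 (coefp n.+1)) /=.
by rewrite coefZ coefXn eqxx mulr1.
Qed.

Lemma splitting_X2 : s 'X^2 = << tree2 >>.
Proof.
have s_S : {subset msupp (s 'X^2) <= [:: tree2]}.
  by move=> t /splitting_leaves [valid_t leaves_t]; rewrite inE (leaves_eq2 valid_t leaves_t).
have := splitting_coef_sum (erefl : uniq [:: tree2]) s_S; rewrite big_seq1 => coef1.
by rewrite (lam_expand (erefl : uniq [:: tree2]) s_S) big_seq1 coef1 scale1r.
Qed.

Lemma splitting_X3 :
  s 'X^3 = \sum_(t <- trees3) (s 'X^3)@_t *: << t >> /\ \sum_(t <- trees3) (s 'X^3)@_t = 1.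
Proof.
have s_S : {subset msupp (s 'X^3) <= trees3}.
  by move=> t /splitting_leaves [valid_t leaves_t]; exact: leaves_eq3 valid_t leaves_t.
by split; [exact: lam_expand | exact: splitting_coef_sum].
Qed.

Lemma splitting_degree5 :
  let c := s 'X^2 in let T := s 'X^3 in
  lam_bracket c (lam_bracket c (lam_bracket c T)) = 6 *: lam_bracket T (lam_bracket c T).
Proof.
rewrite /= (splitting_bracketXn 1 2) !lam_bracketZr (splitting_bracketXn 1 3).
rewrite lam_bracketZr (splitting_bracketXn 1 4) (splitting_bracketXn 2 3) !scalerA.
by congr (_ *: _); lra.
Qed.

End UnitalSplitting.

Theorem theorem7p1 :
  ~ exists s : {poly rat} -> Lam,
      [/\ (* s maps L_0 into Lambda(Q Tree) *)
          (forall f, in_L0 f -> in_Lam (s f)),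
          (* s is Q-linear on L_0 *)
          (forall (r : rat) f g, in_L0 f -> in_L0 g -> s (r *: f + g) = r *: s f + s g),
          (* s preserves brackets *)
          (forall f g, in_L0 f -> in_L0 g -> s (vf_bracket f g) = lam_bracket (s f) (s g)),
          (* s is a section of eps_1 *)
          (forall f, in_L0 f -> eps1 (s f) = f)
        & (* s(x d/dx) = 1 *)
          s 'X = << unit_tree >>].
Proof.
case=> s s_splitting.
have [s_X3 coef_sum] := splitting_X3 s_splitting.
exact: degree5_obstruction (splitting_X2 s_splitting) s_X3 coef_sum
  (splitting_degree5 s_splitting).
Qed.
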